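(* Let $n\ge4$ and let $\lambda=(a_1,\dots,a_n)$ (usual coordinates) be a dominant weight of $SL(n)$ all of whose coordinates $a_i$ are non-integers. If the multiset $\{a_1,\dots,a_n\}$ contains the three values $\alpha+1,\alpha,\alpha-1$ for some $\alpha\in\mathbb R$, then $M(\lambda)$ contains a non-saturated subset.
   Context: Setup for $SL(n)$: $\varepsilon_1,\dots,\varepsilon_n$ is the standard basis of $\mathbb Q^n$, $e_i=\varepsilon_i-\frac1n(1,\dots,1)$; the character lattice $\mathfrak X(T)$ of the diagonal torus is identified with the $\mathbb Z$-span of $e_1,\dots,e_n$ inside $\{y\in\mathbb Q^n:\sum y_i=0\}$ (the $y_i$ are the ''usual coordinates''). $W=S_n$ acts by permuting coordinates. A weight is dominant if $y_1\ge y_2\ge\dots\ge y_n$. The root lattice is $\Phi=\{\sum a_ie_i\mid a_i\in\mathbb Z,\ \sum a_i\equiv0\pmod n\}$. For a dominant weight $\lambda$, $M(\lambda)=\mathrm{conv}\{w\lambda\mid w\in W\}\cap(\lambda+\Phi)$. A finite set is saturated if $\mathbb Z_+(v_1,\dots,v_m)=\mathbb Z(v_1,\dots,v_m)\cap\mathbb Q_+(v_1,\dots,v_m)$ (combinations with non-negative integer, integer, non-negative rational coefficients), non-saturated otherwise. *)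

(* Weights of SL(n) as row vectors in Q^n (usual coordinates). *)
From HB Require Import structures.
From mathcomp Require Import all_boot all_order all_algebra all_fingroup.
Set Implicit Arguments. Unset Strict Implicit. Unset Printing Implicit Defensive.
Import Order.TTheory GRing.Theory Num.Theory.
Local Open Scope ring_scope.

Definition e_vec (n : nat) (i : 'I_n) : 'rV[rat]_n :=
  delta_mx 0 i - (n%:R)^-1 *: const_mx 1.

Definition is_weight (n : nat) (y : 'rV[rat]_n) : Prop :=
  exists a : 'I_n -> int, y = \sum_(i < n) (a i)%:~R *: e_vec i.

Definition in_root_lattice (n : nat) (y : 'rV[rat]_n) : Prop :=
  exists a : 'I_n -> int,
    ((\sum_(i < n) a i) %% (n%:Z))%Z = 0 /\ y = \sum_(i < n) (a i)%:~R *: e_vec i.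

Definition dominant (n : nat) (y : 'rV[rat]_n) : Prop :=
  forall i j : 'I_n, (i <= j)%N -> y 0 j <= y 0 i.

Definition permute (n : nat) (w : 'S_n) (y : 'rV[rat]_n) : 'rV[rat]_n :=
  \row_i y 0 (w^-1 i)%g.

Definition in_Wconv (n : nat) (lam y : 'rV[rat]_n) : Prop :=
  exists c : 'S_n -> rat,
    (forall w, 0 <= c w) /\ \sum_(w : 'S_n) c w = 1 /\
    y = \sum_(w : 'S_n) c w *: permute w lam.

Definition M_set (n : nat) (lam y : 'rV[rat]_n) : Prop :=
  in_Wconv lam y /\ in_root_lattice (y - lam).

Definition Zplus_span (n : nat) (s : seq 'rV[rat]_n) (x : 'rV[rat]_n) : Prop :=
  exists k : 'I_(size s) -> nat, x = \sum_(i < size s) (k i)%:R *: s`_i.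
Definition Z_span (n : nat) (s : seq 'rV[rat]_n) (x : 'rV[rat]_n) : Prop :=
  exists k : 'I_(size s) -> int, x = \sum_(i < size s) (k i)%:~R *: s`_i.
Definition Qplus_span (n : nat) (s : seq 'rV[rat]_n) (x : 'rV[rat]_n) : Prop :=
  exists k : 'I_(size s) -> rat,
    (forall i, 0 <= k i) /\ x = \sum_(i < size s) k i *: s`_i.

Definition saturated (n : nat) (s : seq 'rV[rat]_n) : Prop :=
  forall x, Zplus_span s x <-> (Z_span s x /\ Qplus_span s x).

From HB Require Import structures.
From mathcomp Require Import all_boot all_order all_algebra all_fingroup.
From mathcomp Require Import zify ring lra.
Set Implicit Arguments. Unset Strict Implicit. Unset Printing Implicit Defensive.
Import Order.TTheory GRing.Theory Num.Theory.
Local Open Scope ring_scope.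

(* Let lam_i = alpha + 1, lam_j = alpha, lam_k = alpha - 1 and
   write d_pq = e_p - e_q (the root eps_p - eps_q).  The transpositions
   (i k), (i j), (j k) move lam by integer multiples of roots:
     s_ik lam = lam - 2 d_ik,  s_ij lam = lam - d_ij,  s_jk lam = lam - d_jk,
   so the four vectors  lam, s_ik lam, s_ij lam, s_jk lam  lie in M(lam).
   The vector  x = lam - d_ik  equals  (lam + s_ik lam)/2  (a non-negative
   rational combination) and  -lam + s_ij lam + s_jk lam  (an integral one).
   If x were a non-negative integral combination  a lam + b s_ik lam
   + c s_ij lam + d s_jk lam, then a fourth coordinate m (it exists as n >= 4)
   with lam_m <> 0 (lam_m is not an integer) forces a + b + c + d = 1, and the
   coordinates i and j force 2b + c = 1 and c = d: impossible. *)

Section RootsAndTranspositions.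
Variable n : nat.
Implicit Types (lam : 'rV[rat]_n) (i k t : 'I_n).

(* The root eps_i - eps_k, which also equals e_i - e_k. *)
Definition root_diff i k : 'rV[rat]_n := delta_mx 0 i - delta_mx 0 k.

Lemma sum_kronecker1 (R : pzRingType) (T : finType) (t : T) :
  \sum_s ((s == t)%:R : R) = 1.
Proof. by rewrite (bigD1 t) //= eqxx big1 ?addr0 // => s /negbTE ->. Qed.

Lemma sum_kronecker (V : lmodType rat) (T : finType) (t : T) (F : T -> V) :
  \sum_s ((s == t)%:R : rat) *: F s = F t.
Proof.
rewrite (bigD1 t) //= eqxx scale1r big1 ?addr0 // => s /negbTE ->.
by rewrite scale0r.
Qed.

Lemma e_vec_comb_sum0 (a : 'I_n -> int) : \sum_t a t = 0 ->
  \sum_t (a t)%:~R *: e_vec t = \sum_t (a t)%:~R *: delta_mx 0 t.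
Proof.
move=> a0; rewrite /e_vec.
under eq_bigr => t _ do rewrite scalerBr.
by rewrite sumrB -scaler_suml -rmorph_sum /= a0 scale0r subr0.
Qed.

Lemma root_lattice_root_diff (c : int) i k :
  in_root_lattice (c%:~R *: root_diff i k).
Proof.
pose a t : int := c * ((t == i)%:R - (t == k)%:R).
have a_sum0 : \sum_t a t = 0.
  by rewrite -mulr_sumr sumrB !sum_kronecker1 subrr mulr0.
exists a; split; first by rewrite a_sum0 mod0z.
rewrite e_vec_comb_sum0 //.
under eq_bigr => t _ do rewrite /a rmorphM rmorphB /= !rmorph_nat -scalerA scalerBl.
by rewrite -scaler_sumr sumrB !sum_kronecker.
Qed.

Lemma root_lattice0 : in_root_lattice (0 : 'rV[rat]_n).
Proof.
exists (fun _ => 0); split; first by rewrite big1_eq mod0z.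
by rewrite big1 // => t _; rewrite scale0r.
Qed.

Lemma in_Wconv_permute (w : 'S_n) lam : in_Wconv lam (permute w lam).
Proof.
exists (fun u => (u == w)%:R); split; first by move=> u; rewrite ler0n.
by rewrite sum_kronecker1 sum_kronecker.
Qed.

Lemma permute_tperm x y lam : x != y ->
  permute (tperm x y) lam = lam - (lam 0 x - lam 0 y) *: root_diff x y.
Proof.
move=> xy; apply/matrixP => r t; rewrite ord1 !mxE tpermV.
case: tpermP => [->|->|/eqP tx /eqP ty]; rewrite ?eqxx /=.
- by rewrite (negbTE xy) /=; ring.
- by rewrite eq_sym (negbTE xy) /=; ring.
- by rewrite (negbTE tx) (negbTE ty) /=; ring.
Qed.

Lemma M_set_self lam : M_set lam lam.
Proof.
split; last by rewrite subrr; exact: root_lattice0.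
have permute1 : permute 1%g lam = lam.
  by apply/matrixP => r t; rewrite !mxE invg1 perm1 ord1.
by rewrite -{2}permute1; exact: in_Wconv_permute.
Qed.

Lemma M_set_tperm lam x y (c : int) : x != y ->
  lam 0 x - lam 0 y = c%:~R -> M_set lam (permute (tperm x y) lam).
Proof.
move=> xy hc; split; first exact: in_Wconv_permute.
rewrite permute_tperm // hc addrAC subrr add0r -scaleNr -rmorphN.
exact: root_lattice_root_diff.
Qed.

End RootsAndTranspositions.

Section NonSaturatedFamily.
Variables (n : nat) (lam : 'rV[rat]_n) (i j k m : 'I_n).
Hypotheses (ij : i != j) (jk : j != k) (ik : i != k).
Hypotheses (mi : m != i) (mj : m != j) (mk : m != k).
Hypothesis lam_m_neq0 : lam 0 m != 0.

(* The four weights lam, s_ik lam, s_ij lam, s_jk lam of the main proof. *)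
Definition witness_family : seq 'rV[rat]_n :=
  [:: lam; lam - 2%:R *: root_diff i k; lam - root_diff i j; lam - root_diff j k].

(* The point lam - d_ik is not a non-negative integral combination of the
   family: the coordinate m forces the coefficients to sum to 1, after which
   the coordinates i and j force 2b + c = 1 and c = d. *)
Lemma not_Zplus_witness (a b c d : nat) :
  a%:R *: lam + b%:R *: (lam - 2%:R *: root_diff i k)
    + c%:R *: (lam - root_diff i j) + d%:R *: (lam - root_diff j k)
  <> lam - root_diff i k.
Proof.
set X := (b * 2)%:R *: root_diff i k + c%:R *: root_diff i j
           + d%:R *: root_diff j k.
have -> : a%:R *: lam + b%:R *: (lam - 2%:R *: root_diff i k)
    + c%:R *: (lam - root_diff i j) + d%:R *: (lam - root_diff j k)
    = (a + b + c + d)%:R *: lam - X.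
  by apply/matrixP => r t; rewrite !mxE !natrD natrM; ring.
move=> E.
have sum1 : (a + b + c + d = 1)%N.
  have := congr1 (fun v : 'rV[rat]_n => v 0 m) E.
  rewrite /= !mxE (negbTE mi) (negbTE mj) (negbTE mk) /= => Em.
  have : ((a + b + c + d)%:R - 1) * lam 0 m = 0 by lra.
  move/eqP; rewrite mulf_eq0 (negbTE lam_m_neq0) orbF subr_eq0.
  by rewrite -[1]/(1%:R) eqr_nat => /eqP.
move: E; rewrite sum1 scale1r => /addrI /oppr_inj XE.
have := congr1 (fun v : 'rV[rat]_n => v 0 i) XE.
rewrite /= !mxE !eqxx (negbTE ij) (negbTE ik) /= => Xi.
have := congr1 (fun v : 'rV[rat]_n => v 0 j) XE.
rewrite /= !mxE !eqxx eq_sym (negbTE ij) (negbTE jk) /= => Xj.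
have /eqP : ((b * 2 + c)%:R : rat) = 1%:R by rewrite natrD; lra.
have /eqP : (c%:R : rat) = d%:R by lra.
rewrite !eqr_nat => /eqP cd /eqP bc.
lia.
Qed.

Lemma witness_family_not_saturated : ~ saturated witness_family.
Proof.
have dsum : root_diff i j + root_diff j k = root_diff i k.
  by rewrite /root_diff addrA subrK.
move=> sat.
have [] : Zplus_span witness_family (lam - root_diff i k).
  apply/sat; split.
  - exists (fun r => nth 0 [:: -1; 0; 1; 1] r).
    rewrite !big_ord_recr big_ord0 /= !scaler_int mulrN1z mulr0z !mulr1z.
    by rewrite add0r addr0 addKr -dsum opprD addrCA.
  - exists (fun r => nth 0 [:: 2^-1; 2^-1; 0; 0] r); split.
      by case=> [[|[|[|[|]]]] ] //=; rewrite invr_ge0 ler0n.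
    rewrite !big_ord_recr big_ord0 /= !scale0r !addr0 add0r.
    by apply/matrixP => r t; rewrite !mxE; field.
move=> K; rewrite !big_ord_recr big_ord0 /= add0r => E.
exact: not_Zplus_witness (esym E).
Qed.

End NonSaturatedFamily.

Lemma exists_fourth_index (n : nat) (i j k : 'I_n) : (4 <= n)%N ->
  exists m : 'I_n, [&& m != i, m != j & m != k].
Proof.
move=> hn; apply/existsP; apply: contraLR hn => /existsPn none_other.
have : (#|'I_n| <= 3)%N.
  apply: leq_trans (card_size [:: i; j; k]); apply/subset_leq_card/subsetP.
  move=> x _; move: (none_other x); rewrite !inE.
  by case: (x == i); case: (x == j); case: (x == k).
by rewrite card_ord -ltnNge ltnS.
Qed.

Theorem lemma8 (n : nat) (hn : (4 <= n)%N) (lam : 'rV[rat]_n)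
  (hw : is_weight lam) (hdom : dominant lam)
  (hnonint : forall i : 'I_n, ~ (exists z : int, lam 0 i = z%:~R))
  (h3 : exists alpha : rat, exists i j k : 'I_n,
          [/\ lam 0 i = alpha + 1, lam 0 j = alpha & lam 0 k = alpha - 1]) :
  exists s : seq 'rV[rat]_n, (forall v, v \in s -> M_set lam v) /\ ~ saturated s.
Proof.
case: h3 => al [i [j [k [Hi Hj Hk]]]].
have d_ik : lam 0 i - lam 0 k = 2 by rewrite Hi Hk; lra.
have d_ij : lam 0 i - lam 0 j = 1 by rewrite Hi Hj; lra.
have d_jk : lam 0 j - lam 0 k = 1 by rewrite Hj Hk; lra.
have ij : i != j by apply/eqP => eij; move: d_ij; rewrite eij subrr; lra.
have jk : j != k by apply/eqP => ejk; move: d_jk; rewrite ejk subrr; lra.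
have ik : i != k by apply/eqP => eik; move: d_ik; rewrite eik subrr; lra.
have [m /and3P[mi mj mk]] := exists_fourth_index i j k hn.
have lam_m_neq0 : lam 0 m != 0 by apply/eqP => lam_m0; apply: (hnonint m); exists 0.
exists [:: lam; permute (tperm i k) lam; permute (tperm i j) lam;
           permute (tperm j k) lam]; split.
  move=> v; rewrite !inE => /or4P [] /eqP ->.
  - exact: M_set_self.
  - exact: (M_set_tperm (c := 2) ik d_ik).
  - exact: (M_set_tperm (c := 1) ij d_ij).
  - exact: (M_set_tperm (c := 1) jk d_jk).
rewrite !permute_tperm // d_ik d_ij d_jk !scale1r.
exact: witness_family_not_saturated ij jk ik mi mj mk lam_m_neq0.
Qed.
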